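(* Let $\mathbf{C}$ be a locally small category, $\Omega$ an object, $\Phi\colon\mathbf{C}^{\mathrm{op}}\to\mathbf{Pos}$ a functor whose fibres have all meets preserved by reindexing $f^*=\Phi f$, and $d_\Omega\in\Phi\Omega$. Let $\alpha_Y(S)=\bigwedge_{k\in S}k^*(d_\Omega)$, $\gamma_Y(d)=\{k\in\mathbf{C}(Y,\Omega)\mid d\preceq k^*(d_\Omega)\}$ and $\mathrm{cl}_Y=\gamma_Y\circ\alpha_Y$. Let $F\colon\mathbf{C}\to\mathbf{C}$ be a functor, $(\mathit{ev}_\lambda\colon F\Omega\to\Omega)_{\lambda\in\Lambda}$ morphisms, $\Lambda_Y(S)=\{\mathit{ev}_\lambda\circ Fh\mid\lambda\in\Lambda,h\in S\}$, and $\mathcal{K}_X=\alpha_{FX}\circ\Lambda_X\circ\gamma_X\colon\Phi X\to\Phi(FX)$. Let $\mathrm{cl}'_X$ be a closure operator on $(\mathcal{P}(\mathbf{C}(X,\Omega)),\subseteq)$ with $\mathrm{cl}'_X\subseteq\mathrm{cl}_X$ pointwise. Then $\mathrm{cl}'_X$ is compatible (i.e. $\Lambda_X\circ\mathrm{cl}'_X\circ\mathrm{cl}_X\subseteq\mathrm{cl}_{FX}\circ\Lambda_X\circ\mathrm{cl}'_X$ pointwise) if and only if the depth-1 self-separation property holds: for every $d\in\Phi X$ and every $S\subseteq\mathbf{C}(X,\Omega)$ with $S=\mathrm{cl}'_X(S)$ and $\alpha_X(S)=d$, we have $\alpha_{FX}(\Lambda_X(S))=\mathcal{K}_X(d)$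.
   Context: A closure operator is a monotone, idempotent, extensive map. A set $S$ of predicates is called initial for $d$ if $\alpha_X(S)=d$. *)

From Stdlib Require Import Classical.
Set Implicit Arguments.
Unset Strict Implicit.

Record Category := {
  Ob : Type;
  Hom : Ob -> Ob -> Type;
  idm : forall A, Hom A A;
  comp : forall A B D, Hom B D -> Hom A B -> Hom A D;
  comp_id_l : forall A B (f : Hom A B), comp (idm B) f = f;
  comp_id_r : forall A B (f : Hom A B), comp f (idm A) = f;
  comp_assoc : forall A B D E (h : Hom D E) (g : Hom B D) (f : Hom A B),
      comp h (comp g f) = comp (comp h g) f
}.
Arguments Hom : clear implicits.
Arguments idm {c} A.
Arguments comp {c A B D} _ _.

Record EndoFunctor (C : Category) := {
  Fob : Ob C -> Ob C;
  Fmap : forall A B, Hom C A B -> Hom C (Fob A) (Fob B);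
  Fmap_id : forall A, Fmap (idm A) = idm (Fob A);
  Fmap_comp : forall A B D (g : Hom C B D) (f : Hom C A B),
      Fmap (comp g f) = comp (Fmap g) (Fmap f)
}.
Arguments Fob {C} _ _.
Arguments Fmap {C} _ {A B} _.

Record PosFibration (C : Category) := {
  fib : Ob C -> Type;
  le : forall X, fib X -> fib X -> Prop;
  le_refl : forall X (p : fib X), le p p;
  le_trans : forall X (p q r : fib X), le p q -> le q r -> le p r;
  le_antisym : forall X (p q : fib X), le p q -> le q p -> p = q;
  reindex : forall X Y, Hom C X Y -> fib Y -> fib X;
  reindex_mono : forall X Y (f : Hom C X Y) (p q : fib Y),
      le p q -> le (reindex f p) (reindex f q);
  reindex_id : forall X (p : fib X), reindex (idm X) p = p;
  reindex_comp : forall X Y Z (f : Hom C X Y) (g : Hom C Y Z) (p : fib Z),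
      reindex (comp g f) p = reindex f (reindex g p);
  meet : forall X, (fib X -> Prop) -> fib X;
  meet_lb : forall X (A : fib X -> Prop) p, A p -> le (meet A) p;
  meet_glb : forall X (A : fib X -> Prop) q,
      (forall p, A p -> le q p) -> le q (meet A);
  reindex_meet : forall X Y (f : Hom C X Y) (A : fib Y -> Prop),
      reindex f (meet A) = meet (fun q => exists p, A p /\ q = reindex f p)
}.
Arguments fib {C} _ _.
Arguments le {C} _ {X} _ _.
Arguments reindex {C} _ {X Y} _ _.
Arguments meet {C} _ {X} _.

Section Defs.
Context (C : Category) (Phi : PosFibration C) (Om : Ob C) (dOm : fib Phi Om).

Definition subset {T : Type} (A B : T -> Prop) : Prop := forall x, A x -> B x.

Definition alpha (Y : Ob C) (S : Hom C Y Om -> Prop) : fib Phi Y :=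
  meet Phi (fun p => exists k, S k /\ p = reindex Phi k dOm).

Definition gamma (Y : Ob C) (d : fib Phi Y) : Hom C Y Om -> Prop :=
  fun k => le Phi d (reindex Phi k dOm).

Definition cl (Y : Ob C) (S : Hom C Y Om -> Prop) : Hom C Y Om -> Prop :=
  gamma (alpha S).

Context (F : EndoFunctor C) (Lam : Type) (ev : Lam -> Hom C (Fob F Om) Om).

Definition LamS (Y : Ob C) (S : Hom C Y Om -> Prop) : Hom C (Fob F Y) Om -> Prop :=
  fun k => exists l h, S h /\ k = comp (ev l) (Fmap F h).

Definition Kop (X : Ob C) (d : fib Phi X) : fib Phi (Fob F X) :=
  alpha (LamS (gamma d)).

Definition closure_op {T : Type} (c : (T -> Prop) -> (T -> Prop)) : Prop :=
  (forall A B, subset A B -> subset (c A) (c B)) /\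
  (forall A, subset A (c A)) /\
  (forall A, c (c A) = c A).

Definition compatible (X : Ob C)
  (clp : (Hom C X Om -> Prop) -> (Hom C X Om -> Prop)) : Prop :=
  forall S, subset (LamS (clp (cl S))) (cl (LamS (clp S))).

Definition self_separation (X : Ob C)
  (clp : (Hom C X Om -> Prop) -> (Hom C X Om -> Prop)) : Prop :=
  forall (d : fib Phi X) (S : Hom C X Om -> Prop),
    S = clp S -> alpha S = d -> alpha (LamS S) = Kop d.

End Defs.

Set Implicit Arguments.
Unset Strict Implicit.

(* alpha and gamma form a Galois connection, so cl = gamma o alpha is a closure
   and [alpha T <= alpha S] holds iff [S] lies in [cl T].  Consequently, for any
   set U of predicates, Lambda(cl U) is contained in cl(Lambda U) exactly when
   alpha(Lambda U) = alpha(Lambda(cl U)), and the right-hand side is K(alpha U).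
   Since cl' lies between the identity and cl, compatibility of cl' reduces to
   that inclusion for the cl'-closed sets U, which is self-separation. *)

Section GaloisConnection.
Variables (C : Category) (Phi : PosFibration C) (Om : Ob C) (dOm : fib Phi Om).

Lemma le_alpha_iff_subset_gamma (Y : Ob C) (d : fib Phi Y) (S : Hom C Y Om -> Prop) :
  le Phi d (alpha dOm S) <-> subset S (gamma dOm d).
Proof.
  split.
  - intros Hd k Hk. eapply le_trans; [exact Hd |].
    apply meet_lb. exists k; auto.
  - intros HS. apply meet_glb. intros p [k [Hk ->]]. exact (HS k Hk).
Qed.

Lemma alpha_le_iff_subset_cl (Y : Ob C) (S T : Hom C Y Om -> Prop) :
  le Phi (alpha dOm T) (alpha dOm S) <-> subset S (cl dOm T).
Proof. apply le_alpha_iff_subset_gamma. Qed.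

Lemma subset_cl (Y : Ob C) (S : Hom C Y Om -> Prop) : subset S (cl dOm S).
Proof. apply alpha_le_iff_subset_cl, le_refl. Qed.

Lemma gamma_antitone (Y : Ob C) (d e : fib Phi Y) :
  le Phi d e -> subset (gamma dOm e) (gamma dOm d).
Proof. intros Hde k Hk. eapply le_trans; eauto. Qed.

Lemma cl_mono (Y : Ob C) (S T : Hom C Y Om -> Prop) :
  subset S T -> subset (cl dOm S) (cl dOm T).
Proof.
  intros HST. apply gamma_antitone, alpha_le_iff_subset_cl.
  intros k Hk. apply subset_cl, HST, Hk.
Qed.

Lemma cl_idem (Y : Ob C) (S : Hom C Y Om -> Prop) :
  subset (cl dOm (cl dOm S)) (cl dOm S).
Proof.
  apply gamma_antitone, alpha_le_iff_subset_cl. intros k Hk; exact Hk.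
Qed.

Variables (F : EndoFunctor C) (Lam : Type) (ev : Lam -> Hom C (Fob F Om) Om).

Lemma LamS_mono (Y : Ob C) (S T : Hom C Y Om -> Prop) :
  subset S T -> subset (LamS ev S) (LamS ev T).
Proof. intros HST k [l [h [Hh ->]]]. exists l, h; auto. Qed.

Lemma LamS_cl_subset_iff_alpha_eq (Y : Ob C) (U : Hom C Y Om -> Prop) :
  subset (LamS ev (cl dOm U)) (cl dOm (LamS ev U)) <->
  alpha dOm (LamS ev U) = alpha dOm (LamS ev (cl dOm U)).
Proof.
  rewrite <- alpha_le_iff_subset_cl.
  assert (Hge : le Phi (alpha dOm (LamS ev (cl dOm U))) (alpha dOm (LamS ev U))).
  { apply alpha_le_iff_subset_cl. intros k Hk.
    apply subset_cl. exact (LamS_mono (@subset_cl Y U) Hk). }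
  split.
  - intros Hle. apply le_antisym; assumption.
  - intros ->. apply le_refl.
Qed.

Section RelativeClosure.
Variables (X : Ob C) (clp : (Hom C X Om -> Prop) -> (Hom C X Om -> Prop)).
Hypothesis clp_extensive : forall S, subset S (clp S).
Hypothesis clp_idem : forall S, clp (clp S) = clp S.
Hypothesis clp_sub_cl : forall S, subset (clp S) (cl dOm S).

Lemma compatible_iff_on_clp_closed :
  compatible dOm ev clp <->
  forall T, T = clp T -> subset (LamS ev (cl dOm T)) (cl dOm (LamS ev T)).
Proof.
  split.
  - intros Hcompat T HT k Hk. rewrite HT.
    apply Hcompat. exact (LamS_mono (@clp_extensive (cl dOm T)) Hk).
  - intros Hclosed S k Hk.
    assert (Hcl : subset (clp (cl dOm S)) (cl dOm (clp S))).
    { intros h Hh. apply (cl_mono (@clp_extensive S)), cl_idem, clp_sub_cl, Hh. }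
    apply Hclosed; [symmetry; apply clp_idem |].
    exact (LamS_mono Hcl Hk).
Qed.

End RelativeClosure.
End GaloisConnection.

Theorem lemma3 (C : Category) (Phi : PosFibration C) (Om : Ob C)
  (dOm : fib Phi Om) (F : EndoFunctor C) (Lam : Type)
  (ev : Lam -> Hom C (Fob F Om) Om) (X : Ob C)
  (clp : (Hom C X Om -> Prop) -> (Hom C X Om -> Prop))
  (Hclos : closure_op clp)
  (Hsub : forall S, subset (clp S) (cl dOm S)) :
  compatible dOm ev clp <-> self_separation dOm ev clp.
Proof.
  destruct Hclos as [_ [Hext Hidem]].
  rewrite (compatible_iff_on_clp_closed ev Hext Hidem Hsub).
  unfold self_separation, Kop.
  split.
  - intros Hclosed d S HS <-. apply LamS_cl_subset_iff_alpha_eq, Hclosed, HS.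
  - intros Hsep T HT. apply LamS_cl_subset_iff_alpha_eq, (Hsep _ T HT eq_refl).
Qed.
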